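(* Let $H$ be a digraph with at least two vertices and $r\in V(H)$ such that every vertex of $H$ is reachable from $r$, and let $B_r$ be the diblock of $r$ in $H$. Then for every pair of distinct vertices $x,y\in B_r$ there exist a directed $r$–$x$ path $P_x$ and a directed $r$–$y$ path $P_y$ such that $V(P_x)\cap V(P_y)=\{r\}$.
   Context: Digraphs are finite and without loops; paths are directed. A vertex $v$ is bi-reachable from $r$ if there are two internally vertex-disjoint directed paths from $r$ to $v$. For a digraph $H$ with at least two vertices and $r\in V(H)$ such that every vertex of $H$ is reachable from $r$, the diblock $B_r$ of $r$ in $H$ is the set of all vertices bi-reachable from $r$, together with $r$ and all out-neighbours of $r$. *)

(* A digraph H is a finite type T (the vertex set) with an
   edge relation e : rel T; loops are excluded by the hypothesis
   [irreflexive e] in the theorem. *)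
From mathcomp Require Import all_boot.
Set Implicit Arguments. Unset Strict Implicit. Unset Printing Implicit Defensive.

Section Digraph.
Variable T : finType.
Variable e : rel T.

(* [dipath u v p]: the vertex sequence u :: p is a directed path from u to v
   (consecutive vertices joined by arcs, last vertex v, no repeated vertex).
   Its vertex set is u :: p. *)
Definition dipath (u v : T) (p : seq T) : Prop :=
  [/\ path e u p, last u p = v & uniq (u :: p)].

Definition reachable (r v : T) : Prop := exists p, dipath r v p.

(* v is bi-reachable from r: two internally vertex-disjoint directed r-v paths.
   The vertices of r :: p other than r and v are exactly those of p other than v
   (r does not occur in p by uniqueness). *)
Definition bireachable (r v : T) : Prop :=
  exists p1 p2, [/\ dipath r v p1, dipath r v p2 &
    forall z, z \in p1 -> z \in p2 -> z = v].

Definition in_diblock (r v : T) : Prop :=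
  v = r \/ e r v \/ bireachable r v.
End Digraph.

(* For v <> r in the diblock there are two r-v paths meeting only in r and v
   (when v is an out-neighbour of r, take the arc rv twice).  Fix such a pair
   q1, q2 for y and let p be an r-x path.  If y is not on p, let w be the last
   vertex of p lying on q1 or q2, say on q1: following q1 up to w and then p
   gives an r-x path meeting q2 only in r.  So the theorem can fail only if
   y lies on both of the two r-x paths chosen for x, forcing y = r or y = x. *)
From mathcomp Require Import all_boot.

Set Implicit Arguments.
Unset Strict Implicit.
Unset Printing Implicit Defensive.

Lemma split_last_has (A : Type) (P : pred A) (s : seq A) : has P s ->
  exists s1 w s2, [/\ s = s1 ++ w :: s2, P w & ~~ has P s2].
Proof.
elim/last_ind: s => [|s z IHs] //; rewrite has_rcons.
case Pz: (P z) => /= Ps; first by exists s, z, [::]; rewrite cats1.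
have [s1 [w [s2 [-> Pw nPs2]]]] := IHs Ps.
exists s1, w, (rcons s2 z); split => //; last by rewrite has_rcons Pz.
by rewrite -cats1 -catA cat_cons cats1.
Qed.

Lemma sorted_splice (A : Type) (R : rel A) (s1 s2 s3 : seq A) w :
  sorted R (s1 ++ w :: s2) -> sorted R (w :: s3) -> sorted R (s1 ++ w :: s3).
Proof.
case: s1 => [|a s1] //= ; rewrite !cat_path /= => /and3P[-> -> _].
by case: s3 => //= b s3 /andP[-> ->].
Qed.

Section Fans.
Variables (T : finType) (e : rel T).

Definition openly_disjoint (r v : T) (p q : seq T) :=
  forall z, z \in r :: p -> z \in r :: q -> z = r \/ z = v.

Definition weakly_bireachable (r v : T) :=
  exists p q, [/\ dipath e r v p, dipath e r v q & openly_disjoint r v p q].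

Definition disjoint_fan (r x y : T) :=
  exists px py, [/\ dipath e r x px, dipath e r y py &
    forall z, z \in r :: px -> z \in r :: py -> z = r].

Lemma openly_disjoint_sym r v p q :
  openly_disjoint r v p q -> openly_disjoint r v q p.
Proof. by move=> Hpq z zq zp; apply: Hpq. Qed.

Lemma in_diblock_weakly_bireachable r v : irreflexive e -> v <> r ->
  in_diblock e r v -> weakly_bireachable r v.
Proof.
move=> irr vr [//|[erv|[p [q [Hp Hq Hpq]]]]].
  have Hv : dipath e r v [:: v].
    split; rewrite /= ?erv ?inE ?andbT //; apply/eqP => rv.
    by move: erv; rewrite rv irr.
  exists [:: v], [:: v]; split => // z.
  by rewrite !inE => /orP[] /eqP-> _; [left|right].
exists p, q; split => // z; rewrite !inE => /orP[/eqP->|zp]; first by left.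
by case/orP => [/eqP->|zq]; [left|right; apply: Hpq].
Qed.

Lemma dipath_splice r x y p q s1 w s2 t1 t2 :
  dipath e r x p -> dipath e r y q ->
  r :: p = s1 ++ w :: s2 -> r :: q = t1 ++ w :: t2 -> ~~ has (mem t1) s2 ->
  exists n, r :: n = t1 ++ w :: s2 /\ dipath e r x n.
Proof.
move=> [pp lp up] [pq _ uq] Ep Eq nt1s2.
have [n En] : exists n, r :: n = t1 ++ w :: s2.
  case: t1 Eq {nt1s2} => [|c t1] /= [<- _]; first by exists s2.
  by exists (t1 ++ w :: s2).
exists n; split => //; split.
- have /cat_sorted2[_ sorted_s2] : sorted e (s1 ++ w :: s2) by rewrite -Ep.
  have sorted_t : sorted e (t1 ++ w :: t2) by rewrite -Eq.
  by rewrite -[path _ _ _]/(sorted e (r :: n)) En (sorted_splice sorted_t).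
- by rewrite -[last r n]/(last r (r :: n)) En last_cat -lp
    -[last r p]/(last r (r :: p)) Ep last_cat.
- move: up uq; rewrite En Ep Eq !cat_uniq.
  move=> /and3P[_ _ uws2] /and3P[-> /norP[wt1 _] _].
  by rewrite uws2 andbT /= negb_or wt1.
Qed.

Lemma fan_of_last_meeting r x y p q q' s1 w s2 :
  dipath e r x p -> dipath e r y q -> dipath e r y q' ->
  openly_disjoint r y q q' -> r :: p = s1 ++ w :: s2 ->
  w \in r :: q -> w <> y ->
  ~~ has (mem (r :: q)) s2 -> ~~ has (mem (r :: q')) s2 -> disjoint_fan r x y.
Proof.
move=> Hp Hq Hq' Hqq' Ep wq wy nqs2 nq's2.
have [t1 [t2 Eq]] : exists t1 t2, r :: q = t1 ++ w :: t2.
  by case/splitPr: wq => t1 t2; exists t1, t2.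
have nt1s2 : ~~ has (mem t1) s2.
  apply: contra nqs2; rewrite Eq; apply: sub_has => z.
  by rewrite !inE mem_cat => ->.
have [n [En Hn]] := dipath_splice Hp Hq Ep Eq nt1s2.
exists n, q'; split => // z; rewrite En mem_cat inE.
case/orP=> [zt1|/orP[/eqP->|zs2]] zq'.
- have zq : z \in r :: q by rewrite Eq mem_cat zt1.
  case: (Hqq' z zq zq') => // zy; exfalso.
  have yt2 : y \in w :: t2.
    case: Hq => _ lq _.
    by rewrite -lq -[last r q]/(last r (r :: q)) Eq last_cat /= mem_last.
  case: Hq => _ _; rewrite Eq cat_uniq => /and3P[_ /hasP[]].
  by exists y; rewrite // -zy.
- by case: (Hqq' w wq zq').
- by move/hasP: nq's2; case; exists z.
Qed.

Lemma reroute_or_mem r x y p q1 q2 :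
  dipath e r x p -> dipath e r y q1 -> dipath e r y q2 ->
  openly_disjoint r y q1 q2 -> y \in r :: p \/ disjoint_fan r x y.
Proof.
move=> Hp Hq1 Hq2 Hq12.
pose on_q := predU (mem (r :: q1)) (mem (r :: q2)).
have : has on_q (r :: p) by rewrite /= !inE eqxx.
case/split_last_has => s1 [w [s2 [Ep wq]]].
rewrite has_predU negb_or => /andP[nq1s2 nq2s2].
have [<-|/eqP wy] := eqVneq w y.
  by left; rewrite Ep mem_cat mem_head orbT.
right; case/orP: wq => wq.
- exact: fan_of_last_meeting Hp Hq1 Hq2 Hq12 Ep wq wy nq1s2 nq2s2.
- apply: fan_of_last_meeting Hp Hq2 Hq1 _ Ep wq wy nq2s2 nq1s2.
  exact: openly_disjoint_sym.
Qed.

End Fans.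

Theorem lemma5 (T : finType) (e : rel T) (r : T) :
  irreflexive e -> 1 < #|T| ->
  (forall v : T, reachable e r v) ->
  forall x y : T, in_diblock e r x -> in_diblock e r y -> x <> y ->
  exists px py : seq T,
    [/\ dipath e r x px, dipath e r y py &
        forall z, z \in r :: px -> z \in r :: py -> z = r].
Proof.
move=> irr _ reach x y Dx Dy xy; rewrite -/(disjoint_fan e r x y).
have trivial_path : dipath e r r [::] by [].
have [-> | /eqP xr] := eqVneq x r.
  have [q Hq] := reach y.
  by exists [::], q; split => // z; rewrite inE => /eqP.
have [-> | /eqP yr] := eqVneq y r.
  have [p Hp] := reach x.
  by exists p, [::]; split => // z _; rewrite inE => /eqP.
have [p1 [p2 [Hp1 Hp2 Hp12]]] := in_diblock_weakly_bireachable irr xr Dx.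
have [q1 [q2 [Hq1 Hq2 Hq12]]] := in_diblock_weakly_bireachable irr yr Dy.
case: (reroute_or_mem Hp1 Hq1 Hq2 Hq12) => [yp1|//].
case: (reroute_or_mem Hp2 Hq1 Hq2 Hq12) => [yp2|//].
by case: (Hp12 y yp1 yp2) => [/yr|/esym/xy].
Qed.
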